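(* Let $W$ be a workload matrix and $A$ a strategy matrix with the same number of columns, with $W=WA^+A$ (i.e. every row of $W$ lies in the row space of $A$). Let $C$ be any matrix with the same number of columns and let $\tilde A=\begin{bmatrix}A\\ C\end{bmatrix}$. Then $\|W\tilde A^+\|_F\le\|WA^+\|_F$.
   Context: $M^+$ denotes the Moore–Penrose pseudo-inverse of $M$ and $\|\cdot\|_F$ the Frobenius norm. In the matrix-mechanism framework a strategy $A$ for a workload $W$ is one from which $W$ can be answered, i.e. $W=WA^+A$. *)

From HB Require Import structures.
From mathcomp Require Import all_boot all_order all_algebra.
From Stdlib Require Import ClassicalEpsilon.
Set Implicit Arguments. Unset Strict Implicit. Unset Printing Implicit Defensive.
Import Order.TTheory GRing.Theory Num.Theory.
Local Open Scope ring_scope.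

(* The four Penrose conditions characterizing the Moore-Penrose
   pseudo-inverse X of A (real case: adjoint = transpose). *)
Definition penrose (R : rcfType) (m n : nat) (A : 'M[R]_(m, n)) (X : 'M[R]_(n, m)) : Prop :=
  [/\ A *m X *m A = A,
      X *m A *m X = X,
      (A *m X)^T = A *m X
    & (X *m A)^T = X *m A].

(* The Moore-Penrose pseudo-inverse: the (unique, and always existing)
   matrix satisfying the Penrose conditions. *)
Definition pinv (R : rcfType) (m n : nat) (A : 'M[R]_(m, n)) : 'M[R]_(n, m) :=
  epsilon (inhabits 0) (penrose A).

Definition frob (R : rcfType) (m n : nat) (M : 'M[R]_(m, n)) : R :=
  Num.sqrt (\sum_(i < m) \sum_(j < n) M i j ^+ 2).

(* W is answered by the strategy [A; C] through the padded matrix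
   Y = [W A^+, 0], since Y [A; C] = W A^+ A = W.  Among all solutions Y of
   Y B = W, the pseudo-inverse solution W B^+ = Y (B B^+) has least Frobenius
   norm, because B B^+ is an orthogonal projector and projecting the rows of Y
   can only shrink them.  Hence |W [A; C]^+| <= |Y| = |W A^+|. *)
From mathcomp Require Import all_boot all_order all_algebra.
From Stdlib Require Import ClassicalEpsilon.
Set Implicit Arguments. Unset Strict Implicit. Unset Printing Implicit Defensive.
Import Order.TTheory GRing.Theory Num.Theory.
Local Open Scope ring_scope.

Section Gram.
Variable R : rcfType.

Lemma gram_diag m n (M : 'M[R]_(m, n)) i :
  (M *m M^T) i i = \sum_(j < n) M i j ^+ 2.
Proof. by rewrite !mxE; apply: eq_bigr => j _; rewrite mxE expr2. Qed.

Lemma frob_trace m n (M : 'M[R]_(m, n)) : frob M = Num.sqrt (\tr (M *m M^T)).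
Proof. by congr Num.sqrt; apply: eq_bigr => i _; rewrite gram_diag. Qed.

Lemma trace_gram_ge0 m n (M : 'M[R]_(m, n)) : 0 <= \tr (M *m M^T).
Proof.
apply: sumr_ge0 => i _; rewrite gram_diag.
by apply: sumr_ge0 => j _; exact: sqr_ge0.
Qed.

Lemma gram_eq0 m n (M : 'M[R]_(m, n)) : M *m M^T = 0 -> M = 0.
Proof.
move=> MMt0; apply/matrixP => i j; rewrite mxE.
have /esym/eqP := gram_diag M i; rewrite MMt0 mxE.
rewrite psumr_eq0; last by move=> l _; exact: sqr_ge0.
by move=> /allP /(_ j (mem_index_enum _)) /=; rewrite sqrf_eq0 => /eqP.
Qed.

Lemma gram_unitmx m n (M : 'M[R]_(m, n)) : row_free M -> M *m M^T \in unitmx.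
Proof.
move=> freeM; rewrite -row_free_unit -kermx_eq0 -submx0.
set K := kermx _.
have KM0 : K *m M = 0.
  by apply: gram_eq0; rewrite trmx_mul mulmxA -(mulmxA K) mulmx_ker mul0mx.
have /eqP <- : kermx M == 0 by rewrite kermx_eq0.
by rewrite sub_kermx KM0.
Qed.

End Gram.

Section PseudoInverse.
Variable R : rcfType.

Lemma penrose_full_rank_factor m r n (F : 'M[R]_(m, r)) (G : 'M[R]_(r, n)) :
  row_free G -> row_free F^T -> exists X, penrose (F *m G) X.
Proof.
move=> freeG freeFt.
have uG := gram_unitmx freeG.
have := gram_unitmx freeFt; rewrite trmxK => uF.
set SG := G *m G^T in uG *; set SF := F^T *m F in uF *.
have symSG : SG^T = SG by rewrite trmx_mul trmxK.
have symSF : SF^T = SF by rewrite trmx_mul trmxK.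
set X := G^T *m invmx SG *m invmx SF *m F^T.
have AX : F *m G *m X = F *m invmx SF *m F^T.
  by rewrite !mulmxA -(mulmxA F G) -/SG mulmxK.
have XA : X *m (F *m G) = G^T *m invmx SG *m G.
  by rewrite !mulmxA -(mulmxA _ F^T F) -/SF mulmxKV.
exists X; split.
- by rewrite AX !mulmxA -(mulmxA _ F^T F) -/SF mulmxKV.
- by rewrite XA !mulmxA -(mulmxA _ G G^T) -/SG mulmxKV.
- by rewrite AX !trmx_mul trmxK trmx_inv symSF mulmxA.
- by rewrite XA !trmx_mul trmxK trmx_inv symSG mulmxA.
Qed.

Lemma penrose_pinv m n (A : 'M[R]_(m, n)) : penrose A (pinv A).
Proof.
apply: epsilon_spec; rewrite -(mulmx_base A).
apply: penrose_full_rank_factor; first exact: row_base_free.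
by rewrite /row_free mxrank_tr; exact: col_base_full.
Qed.

End PseudoInverse.

Section FrobeniusMinimality.
Variable R : rcfType.

Lemma gram_mul_proj m n (Y : 'M[R]_(m, n)) (P : 'M[R]_n) :
  P^T = P -> P *m P = P -> Y *m P *m (Y *m P)^T = Y *m P *m Y^T.
Proof. by move=> symP idemP; rewrite trmx_mul symP mulmxA -(mulmxA Y) idemP. Qed.

Lemma frob_mul_proj m n (Y : 'M[R]_(m, n)) (P : 'M[R]_n) :
  P^T = P -> P *m P = P -> frob (Y *m P) <= frob Y.
Proof.
move=> symP idemP; set Q := 1%:M - P.
have symQ : Q^T = Q by rewrite linearB /= trmx1 symP.
have idemQ : Q *m Q = Q.
  by rewrite mulmxBl mul1mx mulmxBr mulmx1 idemP subrr subr0.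
have splitY : Y *m Y^T = Y *m P *m Y^T + Y *m Q *m Y^T.
  by rewrite -mulmxDl -mulmxDr addrC subrK mulmx1.
rewrite !frob_trace ler_sqrt ?trace_gram_ge0 // gram_mul_proj //.
by rewrite splitY mxtraceD lerDl -gram_mul_proj // trace_gram_ge0.
Qed.

Lemma frob_pinv_min k m n (W : 'M[R]_(k, n)) (B : 'M[R]_(m, n)) (Y : 'M[R]_(k, m)) :
  Y *m B = W -> frob (W *m pinv B) <= frob Y.
Proof.
move=> <-; have [BXB _ symBX _] := penrose_pinv B.
rewrite -mulmxA; apply: frob_mul_proj => //.
by rewrite mulmxA BXB.
Qed.

Lemma frob_row_mx0 k m p (X : 'M[R]_(k, m)) : frob (row_mx X (0 : 'M_(k, p))) = frob X.
Proof. by rewrite !frob_trace tr_row_mx mul_row_col mul0mx addr0. Qed.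

End FrobeniusMinimality.

Theorem mainTheorem7 (R : rcfType) (k m p n : nat)
    (W : 'M[R]_(k, n)) (A : 'M[R]_(m, n)) (C : 'M[R]_(p, n)) :
  W = W *m pinv A *m A ->
  frob (W *m pinv (col_mx A C)) <= frob (W *m pinv A).
Proof.
move=> WAA; rewrite -(@frob_row_mx0 R k m p); apply: frob_pinv_min.
by rewrite mul_row_col mul0mx addr0 -WAA.
Qed.
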